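(* For $\alpha\in(-\pi/2,\pi/2]$ and $\beta\in(-\pi/4,0)\cup(0,\pi/4)$ let $$Q(\alpha)=\begin{bmatrix}\cos\alpha&\sin\alpha\\-\sin\alpha&\cos\alpha\end{bmatrix},\qquad \mathbf{h}(\beta)=\begin{bmatrix}\cos\beta\\ \jmath\sin\beta\end{bmatrix},\qquad \mathbf{g}(\alpha,\beta)=Q(\alpha)\mathbf{h}(\beta)\in\mathbb{C}^2,$$ where $\jmath=\sqrt{-1}$. For such $\alpha_p,\beta_p,\alpha_q,\beta_q$, put $\mathbf{g}_p=\mathbf{g}(\alpha_p,\beta_p)$ and $\mathbf{g}_q=\mathbf{g}(\alpha_q,\beta_q)$. Then $\lvert\mathbf{g}_p^{\mathsf H}\mathbf{g}_q\rvert=1$ if and only if $\alpha_p=\alpha_q+k\pi$ for some $k\in\mathbb{Z}$ and $\beta_p=\beta_q$.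
   Context: $X^{\mathsf H}$ denotes conjugate transpose. *)

From Stdlib Require Import Reals.
From Coquelicot Require Import Coquelicot.
Open Scope R_scope.

Definition vec2 := (C * C)%type.
Definition mat2 := ((C * C) * (C * C))%type.  (* rows *)

Definition matvec (M : mat2) (v : vec2) : vec2 :=
  let '((a, b), (c, d)) := M in
  let '(x, y) := v in
  (Cplus (Cmult a x) (Cmult b y), Cplus (Cmult c x) (Cmult d y)).

Definition herm_inner (v w : vec2) : C :=
  Cplus (Cmult (Cconj (fst v)) (fst w)) (Cmult (Cconj (snd v)) (snd w)).

Definition Qmat (a : R) : mat2 :=
  ((RtoC (cos a), RtoC (sin a)), (RtoC (- sin a), RtoC (cos a))).

Definition hvec (b : R) : vec2 := (RtoC (cos b), Cmult Ci (RtoC (sin b))).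

Definition gvec (a b : R) : vec2 := matvec (Qmat a) (hvec b).

Definition alpha_ok (a : R) : Prop := - PI / 2 < a <= PI / 2.
Definition beta_ok (b : R) : Prop := - PI / 4 < b < PI / 4 /\ b <> 0.

(* Expanding the product gives g_p^H g_q = cos(a) cos(d) + j sin(-a) sin(s) with
   a = alpha_p - alpha_q, d = beta_p - beta_q, s = beta_p + beta_q.  Its squared
   modulus is the convex combination cos^2 a * cos^2 d + sin^2 a * sin^2 s of two
   numbers at most 1, so it equals 1 only if every term of positive weight is 1.
   Since |s| < pi/2, sin^2 s < 1, which forces sin a = 0 and then cos^2 d = 1; the
   ranges of the angles leave only a = 0 and d = 0. *)

From Stdlib Require Import Reals ZArith Lra Psatz.
From Coquelicot Require Import Coquelicot.
Open Scope R_scope.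

Lemma herm_inner_gvec ap bp aq bq :
  herm_inner (gvec ap bp) (gvec aq bq) =
  (cos (ap - aq) * cos (bp - bq), sin (aq - ap) * sin (bp + bq)).
Proof.
  rewrite !cos_minus, sin_minus, sin_plus.
  unfold herm_inner, gvec, matvec, Qmat, hvec, Cconj, Cplus, Cmult, RtoC, Ci; simpl.
  f_equal; ring.
Qed.

Lemma Cmod_eq_1 (z : C) : Cmod z = 1 <-> fst z ^ 2 + snd z ^ 2 = 1.
Proof.
  unfold Cmod; split; intro H.
  - rewrite <- (pow2_sqrt (fst z ^ 2 + snd z ^ 2)), H; [ring | nra].
  - rewrite H; exact sqrt_1.
Qed.

Lemma convex_sum_sq_eq_1 c s u v :
  c ^ 2 + s ^ 2 = 1 -> u ^ 2 <= 1 -> v ^ 2 <= 1 ->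
  (c * u) ^ 2 + (s * v) ^ 2 = 1 <-> (c = 0 \/ u ^ 2 = 1) /\ (s = 0 \/ v ^ 2 = 1).
Proof.
  intros Hcs Hu Hv.
  assert (Hdef : 1 - ((c * u) ^ 2 + (s * v) ^ 2)
                 = c ^ 2 * (1 - u ^ 2) + s ^ 2 * (1 - v ^ 2)) by nra.
  assert (Hcu : 0 <= c ^ 2 * (1 - u ^ 2)) by (apply Rmult_le_pos; nra).
  assert (Hsv : 0 <= s ^ 2 * (1 - v ^ 2)) by (apply Rmult_le_pos; nra).
  split.
  - intro H.
    assert (Hc : c ^ 2 * (1 - u ^ 2) = 0) by lra.
    assert (Hs : s ^ 2 * (1 - v ^ 2) = 0) by lra.
    apply Rmult_integral in Hc, Hs.
    split; [destruct Hc | destruct Hs]; [left | right | left | right]; nra.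
  - intros [[-> | Hu1] [-> | Hv1]]; nra.
Qed.

Lemma sin_eq_0_small x : - PI < x < PI -> sin x = 0 -> x = 0.
Proof.
  intros Hx Hs. destruct (Rtotal_order x 0) as [Hlt | [Heq | Hgt]]; auto.
  - assert (0 < sin (- x)) by (apply sin_gt_0; lra).
    rewrite sin_neg in *; lra.
  - assert (0 < sin x) by (apply sin_gt_0; lra). lra.
Qed.

Lemma cos_sq_eq_1_small x : - PI < x < PI -> cos x ^ 2 = 1 -> x = 0.
Proof.
  intros Hx Hc. apply sin_eq_0_small; auto.
  pose proof (sin2_cos2 x). unfold Rsqr in *. nra.
Qed.

Lemma sin_sq_lt_1 x : - PI / 2 < x < PI / 2 -> sin x ^ 2 < 1.
Proof.
  intro Hx. assert (0 < cos x) by (apply cos_gt_0; lra).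
  pose proof (sin2_cos2 x). unfold Rsqr in *. nra.
Qed.

Lemma sin_sq_le_1 x : sin x ^ 2 <= 1.
Proof. pose proof (SIN_bound x). nra. Qed.

Lemma cos_sq_le_1 x : cos x ^ 2 <= 1.
Proof. pose proof (COS_bound x). nra. Qed.

Theorem lemma6 (ap bp aq bq : R) :
  alpha_ok ap -> beta_ok bp -> alpha_ok aq -> beta_ok bq ->
  (Cmod (herm_inner (gvec ap bp) (gvec aq bq)) = 1 <->
   ((exists k : Z, ap = aq + IZR k * PI) /\ bp = bq)).
Proof.
  unfold alpha_ok, beta_ok; intros Hap [Hbp _] Haq [Hbq _].
  assert (Hpyth : cos (ap - aq) ^ 2 + sin (aq - ap) ^ 2 = 1).
  { replace (aq - ap) with (- (ap - aq)) by ring.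
    rewrite sin_neg. pose proof (sin2_cos2 (ap - aq)). unfold Rsqr in *. nra. }
  rewrite herm_inner_gvec, Cmod_eq_1; cbn [fst snd].
  rewrite convex_sum_sq_eq_1; [| exact Hpyth | apply cos_sq_le_1 | apply sin_sq_le_1].
  split.
  - intros [Hcos [Hsin | Hsum]];
      last (pose proof (sin_sq_lt_1 (bp + bq)); lra).
    apply sin_eq_0_small in Hsin; [| lra].
    assert (ap = aq) as -> by lra.
    destruct Hcos as [Hcos | Hd].
    + rewrite Rminus_diag, cos_0 in Hcos; lra.
    + apply cos_sq_eq_1_small in Hd; [| lra].
      split; [exists 0%Z | ]; lra.
  - intros [[k ->] ->]. rewrite Rminus_diag, cos_0. split; [right; ring | left].
    replace (aq - (aq + IZR k * PI)) with (IZR (- k) * PI) by (rewrite opp_IZR; ring).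
    apply sin_eq_0_1; eauto.
Qed.
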